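(* Let $n\ge 1$ and consider the single-input single-output linear system \[ \dot x = A_0 x + b_y y + b_u u,\qquad y = c_0 x, \] with state $x(t)\in\mathbb{R}^n$, input $u$ and output $y$, where $c_0=[1,0,\dots,0]$, $A_0\in\mathbb{R}^{n\times n}$ is a strictly stable (Hurwitz) matrix in observable canonical form (i.e. $A_0$ has ones on the superdiagonal, first column equal to $-[\hat a_1,\dots,\hat a_n]^T$ and zeros elsewhere, so that its characteristic polynomial is $s^n+\hat a_1 s^{n-1}+\dots+\hat a_n$), and $b_y,b_u\in\mathbb{R}^n$ are constant vectors. Let $\theta_y(t),\theta_u(t)\in\mathbb{R}^n$ evolve according to \[ \dot\theta_y = A_0^T\theta_y + c_0^T y,\qquad \dot\theta_u = A_0^T\theta_u + c_0^T u, \] from arbitrary initial conditions. Let $C_0$ be the observability matrix of $(c_0,A_0)$, i.e. the matrix with rows $c_0, c_0A_0,\dots,c_0A_0^{n-1}$, and let $\Theta_y=[\theta_y,\ A_0^T\theta_y,\dots,(A_0^T)^{n-1}\theta_y]$ and $\Theta_u=[\theta_u,\ A_0^T\theta_u,\dots,(A_0^T)^{n-1}\theta_u]$ be the controllability matrices of $(A_0^T,\theta_y)$ and $(A_0^T,\theta_u)$. Define $E_y=C_0^{-1}\Theta_y^T$ and $E_u=C_0^{-1}\Theta_u^T$. Then $E_y b_y + E_u b_u$ converges to $x$ exponentially as $t\to\infty$.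
   Context: This setting arises from an $n$-th order strictly proper SISO plant with transfer function $\frac{b_1s^{n-1}+\dots+b_n}{s^n+a_1s^{n-1}+\dots+a_n}$ in observable canonical form, with $b_y=[\hat a_1-a_1,\dots,\hat a_n-a_n]^T$ and $b_u=[b_1,\dots,b_n]^T$; the lemma holds for any constant vectors $b_y,b_u$ as stated. *)

From HB Require Import structures.
From mathcomp Require Import all_boot all_order all_algebra.
From mathcomp Require Import complex.
From mathcomp Require Import all_classical all_reals.
From mathcomp Require Import topology normedtype derive sequences.
From mathcomp.analysis Require Import exp.
Set Implicit Arguments. Unset Strict Implicit. Unset Printing Implicit Defensive.
Import Order.TTheory GRing.Theory Num.Theory.
Local Open Scope ring_scope.

Section Defs.
Variable R : realType.
Variable n : nat.  (* state dimension is n.+1, i.e. any dimension >= 1 *)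

Definition obs_canon (ahat : 'cV[R]_n.+1) : 'M[R]_n.+1 :=
  \matrix_(i, j) ((j == i.+1 :> nat)%:R - (j == 0 :> nat)%:R * ahat i 0).

Definition c0 : 'rV[R]_n.+1 := delta_mx 0 0.

Definition hurwitz (A : 'M[R]_n.+1) : Prop :=
  forall z : R[i], root (map_poly (real_complex R) (char_poly A)) z ->
    Re z < 0.

Definition obs_mx (c : 'rV[R]_n.+1) (A : 'M[R]_n.+1) : 'M[R]_n.+1 :=
  \matrix_(i, j) (c *m A ^+ i) 0 j.

Definition ctrb_mx (A : 'M[R]_n.+1) (th : 'cV[R]_n.+1) : 'M[R]_n.+1 :=
  \matrix_(i, j) (A ^+ j *m th) i 0.

End Defs.

(* The matrix E(th) = C0^-1 Theta(th)^T is linear in th and maps c0^T to the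
   identity; writing th^T = al C0 it is the polynomial sum_k al_k A0^k in A0,
   so E(A0^T th) = A0 E(th).  Hence the error e = E_y b_y + E_u b_u - x obeys
   de/dt = A0 e.  For Hurwitz A0 every solution of de/dt = A0 e decays
   exponentially: split the characteristic polynomial over C into factors
   X - z_k; by Cayley-Hamilton r chi(A0) e = 0 for every complex row r, and
   peeling off one factor at a time, each complex scalar w = r p(A0) e solves
   dw/dt = z w + f with Re z < 0 and f exponentially decaying, so |w|^2 decays
   exponentially by a Gronwall argument. *)
From HB Require Import structures.
From mathcomp Require Import all_boot all_order all_algebra.
From mathcomp Require Import complex.
From mathcomp Require Import all_classical all_reals.
From mathcomp Require Import topology normedtype derive sequences.
From mathcomp.analysis Require Import exp.
From mathcomp Require Import realfun ring lra.
Set Implicit Arguments. Unset Strict Implicit. Unset Printing Implicit Defensive.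
Import Order.TTheory GRing.Theory Num.Theory.
Import numFieldNormedType.Exports.
Local Open Scope ring_scope.

Section Calculus.
Variable R : realType.

Lemma is_derive_expR_mul (c x : R) :
  is_derive x 1 (fun t => expR (c * t)) (c * expR (c * x)).
Proof.
have c_der : is_derive x 1 ( *%R c) c.
  by apply: is_derive_eq (is_deriveZ c (is_derive_id x 1)) _; rewrite /GRing.scale /= mulr1.
by rewrite mulrC; exact: (is_derive1_comp (f := expR)).
Qed.

Lemma is_derive_mulmx (k m : nat) (M : 'M[R]_(k, m)) (v : R -> 'cV[R]_m)
    (dv : 'cV[R]_m) (t : R) :
  (forall j, is_derive t 1 (fun s => v s j 0) (dv j 0)) ->
  forall i, is_derive t 1 (fun s => (M *m v s) i 0) ((M *m dv) i 0).
Proof.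
move=> v_der i; rewrite mxE.
under eq_fun do rewrite mxE.
have := is_derive_sum (fun j => is_deriveZ (M i j) (v_der j)).
by rewrite fct_sumE.
Qed.

Lemma is_derive_nonincr (f df : R -> R) (a : R) :
  (forall x, a <= x -> is_derive x 1 f (df x)) ->
  (forall x, a <= x -> df x <= 0) ->
  forall s t, a <= s -> s <= t -> f t <= f s.
Proof.
move=> f_der df_le0 s t a_le_s s_le_t.
have f_cont : ({within `[s, t], continuous f})%classic.
  apply: derivable_within_continuous => x; rewrite in_itv /= => /andP[sx _].
  by have [] := f_der x (le_trans a_le_s sx).
have [|c] := @MVT_segment R f df s t s_le_t _ f_cont.
  by move=> x; rewrite in_itv /= => /andP[/ltW sx _]; exact: f_der (le_trans a_le_s sx).
rewrite in_itv /= => /andP[sc _] /eqP; rewrite subr_eq => /eqP ->.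
by rewrite gerDr mulr_le0_ge0 ?df_le0 ?subr_ge0 // (le_trans a_le_s sc).
Qed.

End Calculus.

Section ExpDecay.
Variable R : realType.

Definition exp_decay (F : R -> R) :=
  exists K mu : R, 0 < mu /\ forall t, 1 <= t -> F t <= K * expR (- (mu * t)).

Lemma exp_decay_le (F G : R -> R) :
  (forall t, 1 <= t -> F t <= G t) -> exp_decay G -> exp_decay F.
Proof.
move=> FG [K [mu [mu_gt0 GK]]]; exists K, mu; split=> // t t1.
exact: le_trans (FG t t1) (GK t t1).
Qed.

Lemma exp_decay0 : exp_decay (fun _ => 0).
Proof. by exists 0, 1; split=> // t _; rewrite mul0r. Qed.

Lemma ler_exp_decay (K mu nu t : R) : nu <= mu -> 0 <= t ->
  K * expR (- (mu * t)) <= `|K| * expR (- (nu * t)).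
Proof.
move=> nu_le_mu t_ge0; apply: le_trans (_ : `|K| * expR (- (mu * t)) <= _).
  by rewrite ler_wpM2r ?expR_ge0 ?ler_norm.
by rewrite ler_wpM2l // ler_expR lerN2 ler_wpM2r.
Qed.

Lemma exp_decayD (F G : R -> R) :
  exp_decay F -> exp_decay G -> exp_decay (fun t => F t + G t).
Proof.
move=> [K1 [mu1 [mu1_gt0 FK]]] [K2 [mu2 [mu2_gt0 GK]]].
exists (`|K1| + `|K2|), (Num.min mu1 mu2); split; first by rewrite lt_min mu1_gt0.
move=> t t1; have t_ge0 : 0 <= t by lra.
rewrite mulrDl; apply: lerD.
  by apply: le_trans (FK t t1) (ler_exp_decay _ _ t_ge0); rewrite ge_min lexx.
by apply: le_trans (GK t t1) (ler_exp_decay _ _ t_ge0); rewrite ge_min lexx orbT.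
Qed.

Lemma exp_decayZ (k : R) (F : R -> R) :
  0 <= k -> exp_decay F -> exp_decay (fun t => k * F t).
Proof.
move=> k_ge0 [K [mu [mu_gt0 FK]]]; exists (k * K), mu; split=> // t t1.
by rewrite -mulrA ler_wpM2l ?FK.
Qed.

Lemma exp_decay_sum (I : Type) (r : seq I) (F : I -> R -> R) :
  (forall i, exp_decay (F i)) -> exp_decay (fun t => \sum_(i <- r) F i t).
Proof.
move=> F_decay; elim: r => [|i r IHr].
  by apply: exp_decay_le exp_decay0 => t _; rewrite big_nil.
by apply: exp_decay_le (exp_decayD (F_decay i) IHr) => t _; rewrite big_cons.
Qed.

(* Gronwall-type argument: with [nu < min al mu] and [K2 := K / (mu - nu)],
   the function [(r t + K2 e^(-mu t)) e^(nu t)] is nonincreasing. *)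
Lemma exp_decay_of_deriv_le (r dr : R -> R) (al mu K : R) : 0 < al -> 0 < mu ->
  (forall t : R, 1 <= t -> is_derive t 1 r (dr t)) ->
  (forall t, 1 <= t -> 0 <= r t) ->
  (forall t, 1 <= t -> dr t <= - (al * r t) + K * expR (- (mu * t))) ->
  exp_decay r.
Proof.
move=> al_gt0 mu_gt0 r_der r_ge0 dr_le.
wlog K_ge0 : K dr_le / 0 <= K.
  move=> /(_ `|K|); apply=> // t t1; apply: le_trans (dr_le t t1) _.
  by rewrite lerD2l ler_wpM2r ?expR_ge0 ?ler_norm.
pose m := Num.min al mu.
have m_gt0 : 0 < m by rewrite lt_min al_gt0.
have m_le_al : m <= al by rewrite ge_min lexx.
have m_le_mu : m <= mu by rewrite ge_min lexx orbT.
pose nu := m / 2.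
have nu_gt0 : 0 < nu by rewrite /nu; lra.
pose K2 := K / (mu - nu).
have K2_ge0 : 0 <= K2 by rewrite divr_ge0 // subr_ge0 /nu; lra.
have K2E : (mu - nu) * K2 = K by rewrite mulrC divfK // subr_eq0 gt_eqF // /nu; lra.
pose q t := (r t + K2 * expR (- mu * t)) * expR (nu * t).
pose dq t := (dr t + K2 * (- mu * expR (- mu * t))) * expR (nu * t)
  + (r t + K2 * expR (- mu * t)) * (nu * expR (nu * t)).
have q_der (t : R) : 1 <= t -> is_derive t 1 q (dq t).
  move=> t1; apply: is_derive_eq.
    exact: is_deriveM (is_deriveD (r_der t t1)
      (is_deriveZ K2 (is_derive_expR_mul (- mu) t))) (is_derive_expR_mul nu t).
  by rewrite /dq !fctE /= /GRing.scale /=; ring.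
have dq_le0 t : 1 <= t -> dq t <= 0.
  move=> t1; have := dr_le t t1; have := r_ge0 t t1.
  rewrite -[- (mu * t)]mulNr => rt_ge0 dr_le_t.
  have -> : dq t = expR (nu * t) *
      ((dr t + al * r t - K * expR (- mu * t)) + (nu - al) * r t).
    by rewrite /dq -K2E; ring.
  rewrite pmulr_rle0 ?expR_gt0 //.
  have : (nu - al) * r t <= 0 by rewrite mulr_le0_ge0 // subr_le0 /nu; lra.
  lra.
exists (q 1), nu; split=> // t t1.
rewrite -(ler_pM2r (expR_gt0 (nu * t))) -[X in _ <= X]mulrA -expRD addNr expR0 mulr1.
apply: le_trans (is_derive_nonincr q_der dq_le0 (lexx 1) t1).
by rewrite ler_wpM2r ?expR_ge0 // lerDl mulr_ge0 ?expR_ge0.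
Qed.

(* [(a, b)] is the real form of [w' = (rho + i om) w + (f + i g)]. *)
Lemma exp_decay_complex_ode (a b f g : R -> R) (rho om : R) : rho < 0 ->
  (forall t : R, 1 <= t -> is_derive t 1 a (rho * a t - om * b t + f t)) ->
  (forall t : R, 1 <= t -> is_derive t 1 b (om * a t + rho * b t + g t)) ->
  exp_decay (fun t => f t ^+ 2 + g t ^+ 2) ->
  exp_decay (fun t => a t ^+ 2 + b t ^+ 2).
Proof.
move=> rho_lt0 a_der b_der [K [mu [mu_gt0 fgK]]].
pose al := - rho.
have al_gt0 : 0 < al by rewrite oppr_gt0.
apply: (@exp_decay_of_deriv_le _
  (fun t => 2 * a t * (rho * a t - om * b t + f t)
          + 2 * b t * (om * a t + rho * b t + g t)) al mu (K / al)) => // t t1.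
- apply: is_derive_eq.
    exact: is_deriveD (is_deriveM (a_der t t1) (a_der t t1))
                      (is_deriveM (b_der t t1) (b_der t t1)).
  by rewrite /GRing.scale /=; ring.
- by rewrite addr_ge0 ?sqr_ge0.
have am_gm : 2 * (a t * f t + b t * g t) <=
    al * (a t ^+ 2 + b t ^+ 2) + (f t ^+ 2 + g t ^+ 2) / al.
  rewrite -subr_ge0.
  have -> : al * (a t ^+ 2 + b t ^+ 2) + (f t ^+ 2 + g t ^+ 2) / al
      - 2 * (a t * f t + b t * g t)
      = ((al * a t - f t) ^+ 2 + (al * b t - g t) ^+ 2) / al.
    by field; rewrite gt_eqF.
  by rewrite divr_ge0 ?addr_ge0 ?sqr_ge0 ?ltW.
have fg_le : (f t ^+ 2 + g t ^+ 2) / al <= K / al * expR (- (mu * t)).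
  by rewrite mulrAC ler_wpM2r ?fgK // invr_ge0 ltW.
have -> : 2 * a t * (rho * a t - om * b t + f t)
    + 2 * b t * (om * a t + rho * b t + g t)
    = - (2 * (al * (a t ^+ 2 + b t ^+ 2))) + 2 * (a t * f t + b t * g t).
  by rewrite /al; ring.
lra.
Qed.

End ExpDecay.

Section SquaredNorm.
Variable R : realType.

Definition sqnorm (m : nat) (v : 'cV[R]_m) := \sum_i v i 0 ^+ 2.

Lemma sqnorm_ge0 m (v : 'cV[R]_m) : 0 <= sqnorm v.
Proof. by apply: sumr_ge0 => i _; exact: sqr_ge0. Qed.

Lemma ler_sqnorm m (v : 'cV[R]_m) i : v i 0 ^+ 2 <= sqnorm v.
Proof. by rewrite /sqnorm (bigD1 i) //= lerDl sumr_ge0 // => j _; exact: sqr_ge0. Qed.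

Lemma is_derive_sqnorm m (v : R -> 'cV[R]_m) (dv : 'cV[R]_m) (t : R) :
  (forall i, is_derive t 1 (fun s => v s i 0) (dv i 0)) ->
  is_derive t 1 (fun s => sqnorm (v s)) (2 * \sum_i v t i 0 * dv i 0).
Proof.
move=> v_der; have := is_derive_sum (fun i => is_deriveM (v_der i) (v_der i)).
rewrite fct_sumE mulr_sumr => /is_derive_eq; apply.
by apply: eq_bigr => i _; rewrite /GRing.scale /=; ring.
Qed.

Lemma quad_form_ge m (M : 'M[R]_m) (v : 'cV[R]_m) :
  - ((\sum_i \sum_j `|M i j|) * sqnorm v) <= \sum_i v i 0 * (M *m v) i 0.
Proof.
rewrite mulr_suml -sumrN; apply: ler_sum => i _.
rewrite mxE mulr_suml mulr_sumr -sumrN; apply: ler_sum => j _.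
have := ler_sqnorm v i; have := ler_sqnorm v j.
have := sqr_ge0 (v i 0 + v j 0); have := sqr_ge0 (v i 0 - v j 0).
by case: (lerP 0 (M i j)) => M_ij; [rewrite ger0_norm | rewrite ltr0_norm]; nra.
Qed.

Lemma ler_norm_of_sqr (x y K : R) : 0 <= K -> 0 <= y ->
  x ^+ 2 <= K * y ^+ 2 -> `|x| <= (1 + K) * y.
Proof.
move=> K_ge0 y_ge0 x_sq.
rewrite -(@ler_pXn2r _ 2) ?nnegrE ?mulr_ge0 ?addr_ge0 // real_normK ?num_real //.
by apply: le_trans x_sq _; rewrite exprMn ler_wpM2r ?sqr_ge0 //; nra.
Qed.

End SquaredNorm.

Section ComplexParts.
Variable R : realType.
Local Notation toC := (real_complex R).
Local Notation re_mx := (map_mx (@complex.Re R)).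
Local Notation im_mx := (map_mx (@complex.Im R)).

Lemma re_mx_real k m (M : 'M[R]_(k, m)) : re_mx (map_mx toC M) = M.
Proof. by apply/matrixP => i j; rewrite !mxE. Qed.

Lemma im_mx_real k m (M : 'M[R]_(k, m)) : im_mx (map_mx toC M) = 0.
Proof. by apply/matrixP => i j; rewrite !mxE. Qed.

Lemma re_mxD k m (M N : 'M[R[i]]_(k, m)) : re_mx (M + N) = re_mx M + re_mx N.
Proof. by apply/matrixP => i j; rewrite !mxE raddfD. Qed.

Lemma im_mxD k m (M N : 'M[R[i]]_(k, m)) : im_mx (M + N) = im_mx M + im_mx N.
Proof. by apply/matrixP => i j; rewrite !mxE raddfD. Qed.

Lemma re_mx_mul_real k m l (M : 'M[R[i]]_(k, m)) (N : 'M[R]_(m, l)) :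
  re_mx (M *m map_mx toC N) = re_mx M *m N.
Proof.
apply/matrixP => i j; rewrite !mxE raddf_sum; apply: eq_bigr => p _.
by rewrite !mxE; case: (M i p) => a b /=; ring.
Qed.

Lemma im_mx_mul_real k m l (M : 'M[R[i]]_(k, m)) (N : 'M[R]_(m, l)) :
  im_mx (M *m map_mx toC N) = im_mx M *m N.
Proof.
apply/matrixP => i j; rewrite !mxE raddf_sum; apply: eq_bigr => p _.
by rewrite !mxE; case: (M i p) => a b /=; ring.
Qed.

Lemma re_mxZ k m (z : R[i]) (M : 'M[R[i]]_(k, m)) :
  re_mx (z *: M) = complex.Re z *: re_mx M - complex.Im z *: im_mx M.
Proof. by apply/matrixP => i j; rewrite !mxE; case: z (M i j) => a b [c d]. Qed.

Lemma im_mxZ k m (z : R[i]) (M : 'M[R[i]]_(k, m)) :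
  im_mx (z *: M) = complex.Im z *: re_mx M + complex.Re z *: im_mx M.
Proof. by apply/matrixP => i j; rewrite !mxE; case: z (M i j) => a b [c d] /=; ring. Qed.

Lemma hurwitz_Re_lt0 n (A : 'M[R]_n.+1) (z : R[i]) : hurwitz A ->
  root (map_poly toC (char_poly A)) z -> complex.Re z < 0.
Proof. by move=> A_hurwitz /A_hurwitz; rewrite -complexRe ltcR. Qed.

End ComplexParts.

Section LinearODE.
Variables (R : realType) (n : nat) (A : 'M[R]_n.+1) (e : R -> 'cV[R]_n.+1).
Hypothesis e_ode : forall t : R, 0 < t -> forall i,
  is_derive t 1 (fun s => e s i 0) ((A *m e t) i 0).
Local Notation toC := (real_complex R).
Local Notation re_mx := (map_mx (@complex.Re R)).
Local Notation im_mx := (map_mx (@complex.Im R)).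
Local Notation Ac := (map_mx toC A).

(* Gronwall backwards: [sqnorm (e t) * e^(c t)] is nondecreasing. *)
Lemma sqnorm_bounded_near0 :
  exists B, forall t, 0 <= t -> t <= 1 -> sqnorm (e t) <= B.
Proof.
pose c := 2 * \sum_i \sum_j `|A i j|.
pose h s := - (sqnorm (e s) * expR (c * s)).
pose dh s := - (sqnorm (e s) * (c * expR (c * s))
  + expR (c * s) * (2 * \sum_i e s i 0 * (A *m e s) i 0)).
exists (sqnorm (e 0) + sqnorm (e 1) * expR c) => t t_ge0 t_le1.
have [->|t_neq0] := eqVneq t 0.
  by rewrite lerDl mulr_ge0 ?sqnorm_ge0 ?expR_ge0.
have t_gt0 : 0 < t by rewrite lt_neqAle eq_sym t_neq0.
have h_der s : t <= s -> is_derive s 1 h (dh s).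
  move=> ts; have s_gt0 : 0 < s by exact: lt_le_trans ts.
  apply: is_derive_eq.
    exact: is_deriveN (is_deriveM (is_derive_sqnorm (e_ode s_gt0))
                                  (is_derive_expR_mul c s)).
  by rewrite /dh /GRing.scale /=; ring.
have dh_le0 s : t <= s -> dh s <= 0.
  move=> _; rewrite /dh oppr_le0.
  have -> : forall S E Q : R, S * (c * E) + E * (2 * Q) = E * (c * S + 2 * Q).
    by move=> S E Q; ring.
  by rewrite mulr_ge0 ?expR_ge0 //; have := quad_form_ge A (e s); rewrite /c; lra.
have := is_derive_nonincr h_der dh_le0 (lexx t) t_le1.
rewrite /h mulr1 lerN2 => het.
have := sqnorm_ge0 (e 0); have := sqnorm_ge0 (e t).
have c_ge0 : 0 <= c by rewrite mulr_ge0 // sumr_ge0 // => i _; rewrite sumr_ge0.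
have : 1 <= expR (c * t).
  by apply: le_trans (expR_ge1Dx _); rewrite lerDl mulr_ge0 // ltW.
nra.
Qed.

Definition signal (p : 'rV[R]_n.+1) t := (p *m e t) 0 0.

Lemma signal0 t : signal 0 t = 0.
Proof. by rewrite /signal mul0mx mxE. Qed.

Lemma signalD p q t : signal (p + q) t = signal p t + signal q t.
Proof. by rewrite /signal mulmxDl mxE. Qed.

Lemma signalN p t : signal (- p) t = - signal p t.
Proof. by rewrite /signal mulNmx mxE. Qed.

Lemma signalZ a p t : signal (a *: p) t = a * signal p t.
Proof. by rewrite /signal -scalemxAl mxE. Qed.

Lemma is_derive_signal p (t : R) : 0 < t ->
  is_derive t 1 (signal p) (signal (p *m A) t).
Proof. by move=> t_gt0; rewrite /signal -mulmxA; exact: is_derive_mulmx (e_ode t_gt0) 0. Qed.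

Definition decays (r : 'rV[R[i]]_n.+1) :=
  exp_decay (fun t => signal (re_mx r) t ^+ 2 + signal (im_mx r) t ^+ 2).

Lemma decays0 : decays 0.
Proof.
apply: (exp_decay_le _ (@exp_decay0 R)) => t _.
by rewrite !map_mx0 signal0 expr0n addr0.
Qed.

Lemma decaysD r1 r2 : decays r1 -> decays r2 -> decays (r1 + r2).
Proof.
move=> /(exp_decayZ (ler0n _ 2)) r1_decays /(exp_decayZ (ler0n _ 2)) r2_decays.
apply: (exp_decay_le _ (exp_decayD r1_decays r2_decays)) => t _.
rewrite re_mxD im_mxD 2!signalD.
set a1 := signal (re_mx r1) t; set a2 := signal (re_mx r2) t.
set b1 := signal (im_mx r1) t; set b2 := signal (im_mx r2) t.
have := sqr_ge0 (a1 - a2); have := sqr_ge0 (b1 - b2); lra.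
Qed.

Lemma decaysZ z r : decays r -> decays (z *: r).
Proof.
move=> /(exp_decayZ (addr_ge0 (sqr_ge0 (complex.Re z)) (sqr_ge0 (complex.Im z)))).
apply: exp_decay_le => t _ /=.
rewrite re_mxZ im_mxZ signalD signalN signalD 4!signalZ.
move: (signal _ t) (signal _ t) => a b; lra.
Qed.

Lemma decays_shift z r : complex.Re z < 0 -> decays (r *m Ac - z *: r) -> decays r.
Proof.
set s := _ - _ => Re_z_lt0 s_decays.
have rAc : r *m Ac = s + z *: r by rewrite subrK.
apply: (exp_decay_complex_ode Re_z_lt0 _ _ s_decays) => t t1;
  have t_gt0 : 0 < t := lt_le_trans ltr01 t1.
  apply: is_derive_eq (is_derive_signal _ t_gt0) _.
  by rewrite -re_mx_mul_real rAc re_mxD re_mxZ 2!signalD signalN 2!signalZ addrC.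
apply: is_derive_eq (is_derive_signal _ t_gt0) _.
by rewrite -im_mx_mul_real rAc im_mxD im_mxZ 2!signalD 2!signalZ addrC.
Qed.

Lemma decays_horner_XsubC (rs : seq R[i]) r (p : {poly R[i]}) :
  (forall z, z \in rs -> complex.Re z < 0) ->
  decays (r *m horner_mx Ac (p * \prod_(z <- rs) ('X - z%:P))) ->
  decays (r *m horner_mx Ac p).
Proof.
elim: rs p => [|z rs IHrs] p Re_lt0; first by rewrite big_nil mulr1.
rewrite big_cons mulrA => /IHrs pz_decays.
have {pz_decays} : decays (r *m horner_mx Ac (p * ('X - z%:P))).
  by apply: pz_decays => w w_rs; apply: Re_lt0; rewrite inE w_rs orbT.
rewrite rmorphM rmorphB /= horner_mx_X horner_mx_C -mulmxE mulmxA mulmxBr.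
by rewrite mul_mx_scalar; apply: decays_shift; apply: Re_lt0; exact: mem_head.
Qed.

Lemma decays_hurwitz : hurwitz A -> forall r, decays r.
Proof.
move=> A_hurwitz r.
have [rs char_split] := closed_field_poly_normal (map_poly toC (char_poly A)).
rewrite lead_coef_map (monicP (char_poly_monic A)) rmorph1 scale1r in char_split.
have rs_Re_lt0 z : z \in rs -> complex.Re z < 0.
  by move=> z_rs; apply: hurwitz_Re_lt0 A_hurwitz _; rewrite char_split root_prod_XsubC.
have := @decays_horner_XsubC rs r 1 rs_Re_lt0.
rewrite mul1r -char_split rmorph1 mulmx1; apply.
by rewrite map_char_poly Cayley_Hamilton mulmx0; exact: decays0.
Qed.

Lemma exp_decay_sqnorm : hurwitz A -> exp_decay (fun t => sqnorm (e t)).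
Proof.
move=> A_hurwitz; apply: exp_decay_sum => i.
apply: exp_decay_le (decays_hurwitz A_hurwitz (map_mx toC (delta_mx 0 i))) => t _.
by rewrite /signal re_mx_real im_mx_real mul0mx -rowE !mxE expr0n addr0.
Qed.

Lemma hurwitz_exp_stable : hurwitz A ->
  exists M lam : R, 0 < lam /\
    forall t, 0 <= t -> forall i, `|e t i 0| <= M * expR (- (lam * t)).
Proof.
move=> A_hurwitz.
have [B B_bound] := sqnorm_bounded_near0.
have [K [mu [mu_gt0 K_bound]]] := exp_decay_sqnorm A_hurwitz.
pose lam := mu / 2; have lam_gt0 : 0 < lam by rewrite divr_gt0.
exists ((1 + `|K|) + (1 + `|B|) * expR lam), lam; split=> // t t_ge0 i.
have ei_sq := ler_sqnorm (e t) i.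
have E_gt0 := expR_gt0 (- (lam * t)).
have K1_ge0 : 0 <= 1 + `|K| by rewrite addr_ge0.
have B1_ge0 : 0 <= 1 + `|B| by rewrite addr_ge0.
rewrite mulrDl; case: (ltP t 1) => [t_lt1 | t_ge1].
  have : `|e t i 0| <= (1 + `|B|) * 1.
    apply: ler_norm_of_sqr => //; rewrite expr1n mulr1.
    exact: le_trans ei_sq (le_trans (B_bound t t_ge0 (ltW t_lt1)) (ler_norm B)).
  have : 1 <= expR lam * expR (- (lam * t)).
    rewrite -expRD -expR0 ler_expR subr_ge0 -{2}[lam]mulr1.
    by rewrite ler_wpM2l // ltW.
  have : 0 <= (1 + `|K|) * expR (- (lam * t)) by rewrite mulr_ge0 // ltW.
  nra.
have : `|e t i 0| <= (1 + `|K|) * expR (- (lam * t)).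
  apply: ler_norm_of_sqr; rewrite ?expR_ge0 //.
  have -> : expR (- (lam * t)) ^+ 2 = expR (- (mu * t)).
    by rewrite expr2 -expRD /lam; congr expR; field.
  exact: le_trans ei_sq (le_trans (K_bound t t_ge1) (ler_exp_decay _ (lexx mu) t_ge0)).
have : 0 <= (1 + `|B|) * expR lam * expR (- (lam * t)).
  by rewrite !mulr_ge0 // ?expR_ge0 // ltW.
lra.
Qed.

End LinearODE.

Section Reconstruction.
Variables (R : realType) (n : nat).
Local Notation N := n.+1.

Lemma trmxX (B : 'M[R]_N) k : (B ^+ k)^T = B^T ^+ k.
Proof.
elim: k => [|k IHk]; first by rewrite !expr0 trmx1.
by rewrite exprS exprSr -mulmxE trmx_mul IHk.
Qed.

Lemma ctrb_mxD (B : 'M[R]_N) u v : ctrb_mx B (u + v) = ctrb_mx B u + ctrb_mx B v.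
Proof.
apply/matrixP => i j; rewrite [LHS]mxE mulmxDr [RHS]mxE.
by rewrite [ctrb_mx B u i j]mxE [ctrb_mx B v i j]mxE mxE.
Qed.

Lemma ctrb_mxZ (B : 'M[R]_N) a u : ctrb_mx B (a *: u) = a *: ctrb_mx B u.
Proof.
by apply/matrixP => i j; rewrite [LHS]mxE -scalemxAr [RHS]mxE [ctrb_mx B u i j]mxE mxE.
Qed.

Variables (A : 'M[R]_N) (c : 'rV[R]_N).
Hypothesis obs_unit : obs_mx c A \in unitmx.

Lemma row_obs_mx i : row i (obs_mx c A) = c *m A ^+ i.
Proof. by apply/rowP => j; rewrite !mxE. Qed.

Lemma row_trmx_ctrb th i : row i (ctrb_mx A^T th)^T = th^T *m A ^+ i.
Proof.
apply/rowP => j; rewrite !mxE -trmxX.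
by apply: eq_bigr => k _; rewrite !mxE mulrC.
Qed.

Lemma trmx_ctrb_mulmx th b : (ctrb_mx A^T th)^T *m b = (ctrb_mx A b)^T *m th.
Proof.
apply/row_matrixP => i; rewrite !row_mul row_trmx_ctrb.
have -> : row i (ctrb_mx A b)^T = (A ^+ i *m b)^T by apply/rowP => j; rewrite !mxE.
rewrite -mulmxA -{2}[th]trmxK -trmx_mul.
by apply/rowP => j; rewrite ord1 [RHS]mxE.
Qed.

Definition recon_mx th := invmx (obs_mx c A) *m (ctrb_mx A^T th)^T.

Lemma recon_mxD u v : recon_mx (u + v) = recon_mx u + recon_mx v.
Proof. by rewrite /recon_mx ctrb_mxD [(_ + _)^T]linearD mulmxDr. Qed.

Lemma recon_mxZ a u : recon_mx (a *: u) = a *: recon_mx u.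
Proof. by rewrite /recon_mx ctrb_mxZ [(_ *: _)^T]linearZ scalemxAr. Qed.

Lemma recon_mx_c : recon_mx c^T = 1%:M.
Proof.
rewrite /recon_mx (_ : (ctrb_mx A^T c^T)^T = obs_mx c A) ?mulVmx //.
by apply/row_matrixP => i; rewrite row_trmx_ctrb row_obs_mx trmxK.
Qed.

(* With [th^T = al *m obs_mx c A], each row [th^T A^i] of the transposed
   controllability matrix equals [c A^i P] for the polynomial [P] in [A] below. *)
Lemma recon_mx_sum th :
  recon_mx th = \sum_k (th^T *m invmx (obs_mx c A)) 0 k *: A ^+ k.
Proof.
set al := th^T *m _; have th_al : th^T = al *m obs_mx c A by rewrite mulmxKV.
rewrite /recon_mx; apply: (canLR (mulKmx obs_unit)).
apply/row_matrixP => i; rewrite row_mul row_trmx_ctrb row_obs_mx th_al.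
rewrite [al *m _]mulmx_sum_row mulmx_suml mulmx_sumr; apply: eq_bigr => k _.
by rewrite row_obs_mx -!scalemxAl -scalemxAr -!mulmxA !mulmxE -!exprD addnC.
Qed.

Lemma recon_mx_trmx_mul th : recon_mx (A^T *m th) = A *m recon_mx th.
Proof.
have shift : (ctrb_mx A^T (A^T *m th))^T = (ctrb_mx A^T th)^T *m A.
  apply/row_matrixP => i; rewrite row_mul !row_trmx_ctrb trmx_mul trmxK.
  by rewrite -!mulmxA !mulmxE -exprS -exprSr.
rewrite /recon_mx shift mulmxA -/(recon_mx th) recon_mx_sum.
rewrite mulmx_suml mulmx_sumr; apply: eq_bigr => k _.
by rewrite -scalemxAl -scalemxAr !mulmxE -exprS -exprSr.
Qed.

Lemma recon_mx_observer th y (b : 'cV[R]_N) :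
  recon_mx (A^T *m th + y *: c^T) *m b = A *m (recon_mx th *m b) + y *: b.
Proof.
by rewrite recon_mxD recon_mxZ recon_mx_trmx_mul recon_mx_c mulmxDl -scalemxAl mul1mx -mulmxA.
Qed.

Lemma is_derive_recon_mulmx (th : R -> 'cV[R]_N) (dth b : 'cV[R]_N) (t : R) :
  (forall j, is_derive t 1 (fun s => th s j 0) (dth j 0)) ->
  forall i, is_derive t 1 (fun s => (recon_mx (th s) *m b) i 0) ((recon_mx dth *m b) i 0).
Proof.
move=> th_der i; rewrite /recon_mx -mulmxA trmx_ctrb_mulmx mulmxA.
under eq_fun do rewrite -mulmxA trmx_ctrb_mulmx mulmxA.
exact: is_derive_mulmx.
Qed.

Lemma observer_error_ode (b_y b_u : 'cV[R]_N) (x th_y th_u : R -> 'cV[R]_N)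
    (y u : R -> R) (t : R) :
  (forall i, is_derive t 1 (fun s => x s i 0)
     ((A *m x t + y t *: b_y + u t *: b_u) i 0)) ->
  (forall i, is_derive t 1 (fun s => th_y s i 0) ((A^T *m th_y t + y t *: c^T) i 0)) ->
  (forall i, is_derive t 1 (fun s => th_u s i 0) ((A^T *m th_u t + u t *: c^T) i 0)) ->
  let err s := recon_mx (th_y s) *m b_y + recon_mx (th_u s) *m b_u - x s in
  forall i, is_derive t 1 (fun s => err s i 0) ((A *m err t) i 0).
Proof.
move=> x_der thy_der thu_der err i.
have entry (M1 M2 M3 : 'cV[R]_N) : (M1 + M2 - M3) i 0 = M1 i 0 + M2 i 0 - M3 i 0.
  by rewrite !mxE.
under eq_fun do rewrite entry.
apply: is_derive_eq.
  exact: is_deriveB (is_deriveD (is_derive_recon_mulmx b_y thy_der i)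
                                (is_derive_recon_mulmx b_u thu_der i)) (x_der i).
have regroup (a a' z p q : 'cV[R]_N) : a + p + (a' + q) - (z + p + q) = a + a' - z.
  by rewrite addrACA -[z + p + q]addrA [z + _]addrC addrKA.
by rewrite !recon_mx_observer -!entry regroup mulmxBr mulmxDr.
Qed.

End Reconstruction.

Lemma c0_mul_obs_canonX (R : realType) (n : nat) (ahat : 'cV[R]_n.+1) k (j : 'I_n.+1) :
  (k <= j)%N -> (@c0 R n *m obs_canon ahat ^+ k) 0 j = (j == k :> nat)%:R.
Proof.
elim: k j => [|k IHk] j k_le_j; first by rewrite expr0 mulmx1 !mxE.
have k_lt_N : (k < n.+1)%N by apply: ltn_trans (ltn_ord j).
have j_neq0 : (j == 0%N :> nat) = false.
  by apply/negbTE; rewrite -lt0n (leq_ltn_trans _ k_le_j).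
rewrite exprSr mulmxA mxE (bigD1 (Ordinal k_lt_N)) //= big1 ?addr0.
  by rewrite IHk //= eqxx mul1r !mxE j_neq0 mul0r subr0.
move=> l l_neq_k; rewrite [X in _ * X]mxE j_neq0 mul0r subr0.
have [j_eq|] := eqVneq (val j) l.+1; last by rewrite mulr0.
rewrite IHk; last by rewrite -ltnS -j_eq.
have l_neq_k' : (l != k :> nat) by apply: contra l_neq_k => /eqP l_eq; apply/eqP/val_inj.
by rewrite (negbTE l_neq_k') mul0r.
Qed.

Lemma obs_canon_unit (R : realType) (n : nat) (ahat : 'cV[R]_n.+1) :
  obs_mx (@c0 R n) (obs_canon ahat) \in unitmx.
Proof.
have trig : is_trig_mx (obs_mx (@c0 R n) (obs_canon ahat)).
  by apply/is_trig_mxP => i j ij; rewrite mxE c0_mul_obs_canonX ?(ltnW ij) // gtn_eqF.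
rewrite unitmxE det_trig // big1 ?unitr1 // => i _.
by rewrite mxE c0_mul_obs_canonX // eqxx.
Qed.

Theorem lemma1 (R : realType) (n : nat) (ahat b_y b_u : 'cV[R]_n.+1)
  (x th_y th_u : R -> 'cV[R]_n.+1) (y u : R -> R) :
  let A0 := obs_canon ahat in
  let c0 := @c0 R n in
  hurwitz A0 ->
  (forall t : R, y t = (c0 *m x t) 0 0) ->
  (forall t : R, 0 < t -> forall i : 'I_n.+1,
     is_derive t 1 (fun s => x s i 0)
       ((A0 *m x t + y t *: b_y + u t *: b_u) i 0)) ->
  (forall t : R, 0 < t -> forall i : 'I_n.+1,
     is_derive t 1 (fun s => th_y s i 0)
       ((A0^T *m th_y t + y t *: c0^T) i 0)) ->
  (forall t : R, 0 < t -> forall i : 'I_n.+1,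
     is_derive t 1 (fun s => th_u s i 0)
       ((A0^T *m th_u t + u t *: c0^T) i 0)) ->
  let C0 := obs_mx c0 A0 in
  let E_y := fun t => invmx C0 *m (ctrb_mx A0^T (th_y t))^T in
  let E_u := fun t => invmx C0 *m (ctrb_mx A0^T (th_u t))^T in
  exists M lam : R, 0 < lam /\
    forall t : R, 0 <= t -> forall i : 'I_n.+1,
      `|(E_y t *m b_y + E_u t *m b_u - x t) i 0| <= M * expR (- (lam * t)).
Proof.
move=> A0 c0 A0_hurwitz _ x_der thy_der thu_der C0 E_y E_u.
have C0_unit : C0 \in unitmx := obs_canon_unit ahat.
pose err t := E_y t *m b_y + E_u t *m b_u - x t.
have err_ode (t : R) : 0 < t ->
    forall i, is_derive t 1 (fun s => err s i 0) ((A0 *m err t) i 0).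
  move=> t_gt0.
  exact (observer_error_ode C0_unit (x_der t t_gt0) (thy_der t t_gt0) (thu_der t t_gt0)).
exact: hurwitz_exp_stable err_ode A0_hurwitz.
Qed.
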